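(* Let $n,k$ be integers with $2<2k\le n$. Suppose that the integer program $( * )$ has a solution but no trivial solution, and let $(\mathsf{u},\mathsf{v}_+,\mathsf{v}_-,r,t)$ be a (necessarily nontrivial) solution of $( * )$. Then there is a homomorphism $K_{4r+2}\to \mathrm{Pet}(n,k)^{2r+1}$ (i.e., $\mathrm{Pet}(n,k)^{2r+1}$ contains a clique on $4r+2$ vertices).
   Context: For integers $n,k$ with $2<2k\le n$, the generalized Petersen graph $\mathrm{Pet}(n,k)$ has vertex set $\{u_0,\dots,u_{n-1}\}\cup\{v_0,\dots,v_{n-1}\}$ and edge set $\{u_iu_{i+1}\}\cup\{u_iv_i\}\cup\{v_iv_{i+k}\}$, indices modulo $n$. The integer program $( * )$ is: minimize $\mathsf{u}+\mathsf{v}_++\mathsf{v}_-$ over integers $\mathsf{u},\mathsf{v}_+,\mathsf{v}_-,r\ge 0$ and $t\in\mathbb{Z}$ subject to $\mathsf{u}+k(\mathsf{v}_+-\mathsf{v}_-)=tn$ and $\mathsf{u}+\mathsf{v}_++\mathsf{v}_-=2r+1$. A solution of $( * )$ is a minimizer $(\mathsf{u},\mathsf{v}_+,\mathsf{v}_-,r,t)$; it is trivial if $\mathsf{u}=0$ or $\mathsf{v}_++\mathsf{v}_-=0$, and nontrivial otherwise. For a graph $G$ and positive integer $m$, the power graph $G^m$ has vertex set $V(G)$, two distinct vertices being adjacent iff there is a walk of length exactly $m$ between them in $G$. A homomorphism $G\to H$ is a map $V(G)\to V(H)$ sending edges to edges. *)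

From mathcomp Require Import all_boot all_order all_algebra.
Set Implicit Arguments. Unset Strict Implicit. Unset Printing Implicit Defensive.
Import GRing.Theory Num.Theory.

(* Vertices of Pet(n,k): (false, i) = u_i, (true, i) = v_i, i : 'I_n. *)
Definition pet_vertex (n : nat) : finType := (bool * 'I_n)%type.

Definition pet_adj (n k : nat) : rel (pet_vertex n) :=
  fun x y =>
    match x, y with
    | (false, i), (false, j) => (j == (i + 1) %% n :> nat) || (i == (j + 1) %% n :> nat)
    | (false, i), (true, j) => i == j
    | (true, i), (false, j) => i == j
    | (true, i), (true, j) => (j == (i + k) %% n :> nat) || (i == (j + k) %% n :> nat)
    end.

Definition walk_of_length (T : eqType) (e : rel T) (m : nat) (x y : T) : Prop :=
  exists p : seq T, size p = m /\ path e x p /\ last x p = y.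

Definition power_adj (T : eqType) (e : rel T) (m : nat) (x y : T) : Prop :=
  x != y /\ walk_of_length e m x y.

Definition complete_hom (T : Type) (N : nat) (adj : T -> T -> Prop) (f : 'I_N -> T) : Prop :=
  forall i j : 'I_N, i != j -> adj (f i) (f j).

Definition ip_feasible (n k : nat) (u vp vm r : nat) (t : int) : Prop :=
  (u%:Z + k%:Z * (vp%:Z - vm%:Z) = t * n%:Z)%R /\ u + vp + vm = 2 * r + 1.

Definition ip_solution (n k : nat) (u vp vm r : nat) (t : int) : Prop :=
  ip_feasible n k u vp vm r t /\
  forall u' vp' vm' r' t', ip_feasible n k u' vp' vm' r' t' -> u + vp + vm <= u' + vp' + vm'.

Definition ip_trivial (u vp vm : nat) : Prop := u = 0 \/ vp + vm = 0.

Arguments pet_adj n k : clear implicits.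
Arguments ip_feasible n k u vp vm r t : clear implicits.
Arguments ip_solution n k u vp vm r t : clear implicits.

From mathcomp Require Import all_boot all_order all_algebra.
From mathcomp Require Import zify ring.
Import GRing.Theory Num.Theory.

(* A solution of ( * ) is an odd closed walk of length 2r+1 in the universal
   cover of Pet(n,k): u rim steps followed by vp + vm inner steps, which by
   minimality all go in the same direction.  Let p_0, ..., p_2r be the
   positions visited; the clique consists of u_(p_i) and v_(p_i).  Two
   positions split the cycle into arcs of lengths m and 2r+1-m, of different
   parities; following the arc of the right parity and adding one or two
   spokes gives a walk of odd length at most 2r+1, which is padded by going
   back and forth along a spoke.  Distinct positions stay distinct mod n,
   because otherwise the odd one of the two arcs would be a shorter feasible
   point of ( * ). *)

Set Implicit Arguments.

Section Walks.
Variables (T : eqType) (e : rel T).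

Lemma walk0 x : walk_of_length e 0 x x.
Proof. by exists [::]. Qed.

Lemma walk1 x y : e x y -> walk_of_length e 1 x y.
Proof. by move=> exy; exists [:: y]; rewrite /= exy. Qed.

Lemma walk_cat m1 m2 x y z :
  walk_of_length e m1 x y -> walk_of_length e m2 y z ->
  walk_of_length e (m1 + m2) x z.
Proof.
move=> [p1 [<- [e_p1 <-]]] [p2 [<- [e_p2 <-]]]; exists (p1 ++ p2).
by rewrite size_cat cat_path last_cat e_p1 e_p2.
Qed.

Hypothesis e_sym : symmetric e.

Lemma walk_pad m M x y z : e y z -> m <= M -> odd m = odd M ->
  walk_of_length e m x y -> walk_of_length e M x y.
Proof.
move=> eyz le_mM odd_mM walk_m.
have even_MBm : ~~ odd (M - m) by rewrite oddB // odd_mM addbb.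
rewrite -(subnKC le_mM) -(odd_double_half (M - m)) (negbTE even_MBm) add0n.
elim: (M - m)./2 => [|d IHd]; first by rewrite addn0.
have back_forth : walk_of_length e 2 y y.
  by apply: (walk_cat (walk1 eyz) (walk1 _)); rewrite e_sym.
by rewrite doubleS -addn2 addnA; apply: walk_cat back_forth.
Qed.

Section Arithmetic.
Variables (f : int -> T) (d : int).
Hypothesis e_step : forall z, e (f z) (f (z + d)%R).

Lemma walk_progression_nat (m : nat) z : walk_of_length e m (f z) (f (z + d * m%:Z)%R).
Proof.
elim: m z => [|m IHm] z; first by rewrite mulr0 addr0; apply: walk0.
have := walk_cat (walk1 (e_step z)) (IHm (z + d)%R).
by rewrite add1n; congr (walk_of_length _ _ _ (f _)); lia.
Qed.

End Arithmetic.

Lemma walk_progression (f : int -> T) (d : int) :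
  (forall z, e (f z) (f (z + d)%R)) ->
  forall (a : int) z, walk_of_length e `|a|%N (f z) (f (z + d * a)%R).
Proof.
move=> e_step [] m z; first exact: walk_progression_nat.
have e_back w : e (f w) (f (w + - d)%R) by rewrite e_sym -{2}(subrK d w).
by rewrite NegzE abszN mulrN -mulNr; apply: walk_progression_nat.
Qed.

End Walks.

Arguments walk0 {T e x}.
Arguments walk1 {T e x y}.
Arguments walk_pad {T e} e_sym {m M x y z}.
Arguments walk_progression {T e} e_sym {f d}.

Lemma odd_cycle_arc (N m : nat) (same : bool) : odd N -> m < N -> (same -> 0 < m) ->
  exists d : nat, [/\ d = m \/ d + m = N, odd d = same & d + (if same then 2 else 1) <= N].
Proof.
move=> odd_N lt_mN pos_m.
have odd_NBm : odd (N - m) = ~~ odd m by rewrite oddB ?odd_N // ltnW.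
case: same pos_m; case odd_m: (odd m) (odd_double_half m) (odd_double_half N);
  rewrite odd_N => def_m def_N pos_m.
- by exists m; split=> //; [left | lia].
- exists (N - m); rewrite odd_NBm odd_m; split=> //; [right | have := pos_m isT]; lia.
- exists (N - m); rewrite odd_NBm odd_m; split=> //; [right | ]; lia.
- by exists m; split=> //; [left | lia].
Qed.

Local Open Scope ring_scope.

Section PetersenWalks.
Variables (n k : nat).
Hypothesis n_gt0 : (0 < n)%N.

Lemma absz_modz_lt (z : int) : (`|(z %% n)%Z| < n)%N.
Proof. by rewrite -ltz_nat gez0_abs ?modz_ge0 ?ltz_pmod //; lia. Qed.

Definition ordz (z : int) : 'I_n := Ordinal (absz_modz_lt z).

Lemma ordzE z : (ordz z)%:Z = (z %% n)%Z.
Proof. by rewrite /= gez0_abs // modz_ge0 //; lia. Qed.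

Lemma ordz_eq z1 z2 : (ordz z1 == ordz z2) = (z1 == z2 %[mod n])%Z.
Proof. by rewrite -val_eqE -eqz_nat !ordzE. Qed.

Lemma ordzDn z (c : nat) : ordz (z + c%:Z) = ((ordz z + c) %% n)%N :> nat.
Proof. by apply/eqP; rewrite -eqz_nat ordzE -modz_nat PoszD ordzE modzDml. Qed.

Definition petv (b : bool) (z : int) : pet_vertex n := (b, ordz z).

Lemma petv_eq b1 b2 z1 z2 :
  (petv b1 z1 == petv b2 z2) = (b1 == b2) && (z1 == z2 %[mod n])%Z.
Proof. by rewrite xpair_eqE ordz_eq. Qed.

Lemma pet_adj_sym : symmetric (pet_adj n k).
Proof. by case=> [[] i] [[] j] /=; rewrite 1?orbC 1?eq_sym. Qed.

Lemma pet_adj_spoke b (i : 'I_n) : pet_adj n k (b, i) (~~ b, i).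
Proof. by case: b => /=. Qed.

Lemma pet_adj_rim z : pet_adj n k (petv false z) (petv false (z + 1)).
Proof. by apply/orP; left; apply/eqP; exact: (ordzDn z 1). Qed.

Lemma pet_adj_inner z : pet_adj n k (petv true z) (petv true (z + k%:Z)).
Proof. by apply/orP; left; apply/eqP; exact: ordzDn. Qed.

Lemma pet_walk x y (a b : int) z :
  walk_of_length (pet_adj n k) (`|a| + `|b| + (if x == y then 2 else 1))%N
    (petv x z) (petv y (z + a + k%:Z * b)).
Proof.
have rim a' z' : walk_of_length (pet_adj n k) `|a'| (petv false z') (petv false (z' + a')).
  by rewrite -[a' in z' + a']mul1r; exact: (walk_progression pet_adj_sym (f := petv false) pet_adj_rim).
have inner := walk_progression pet_adj_sym (f := petv true) pet_adj_inner.
have spoke b' z' : walk_of_length (pet_adj n k) 1 (petv b' z') (petv (~~ b') z').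
  exact/walk1/pet_adj_spoke.
case: x; case: y => /=.
- have := walk_cat (spoke true z) (walk_cat (rim a z)
    (walk_cat (spoke false (z + a)) (inner b (z + a)))).
  by congr walk_of_length; lia.
- have := walk_cat (inner b z) (walk_cat (spoke true _) (rim a (z + k%:Z * b))).
  by congr walk_of_length; [lia | congr petv; lia].
- have := walk_cat (rim a z) (walk_cat (spoke false (z + a)) (inner b (z + a))).
  by congr walk_of_length; lia.
- have := walk_cat (rim a z) (walk_cat (spoke false (z + a))
    (walk_cat (inner b (z + a)) (spoke true _))).
  by congr walk_of_length; lia.
Qed.

End PetersenWalks.

Arguments ordz {n} n_gt0 z.
Arguments petv {n} n_gt0 b z.
Arguments pet_walk {n} k n_gt0 x y a b z.

Section IntegerProgram.
Variables (n k u vp vm r : nat) (t : int).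
Hypothesis sol : ip_solution n k u vp vm r t.

Lemma ip_solution_le_odd_cycle (a b : int) :
  (n%:Z %| a + k%:Z * b)%Z -> odd (`|a| + `|b|) -> (2 * r + 1 <= `|a| + `|b|)%N.
Proof.
case/dvdzP=> q def_q odd_ab; have [[_ sum_r] min_sol] := sol.
have min_le u' vp' vm' r' t' :
    ip_feasible n k u' vp' vm' r' t' -> (2 * r + 1 <= u' + vp' + vm')%N.
  by rewrite -sum_r; apply: min_sol.
have [R def_R] : exists R, (`|a| + `|b| = 2 * R + 1)%N.
  by exists (`|a| + `|b|)./2; rewrite -[LHS]odd_double_half odd_ab; lia.
move: def_q def_R; clear odd_ab.
case: a => a; case: b => b; rewrite ?NegzE /= => def_q def_R.
- by apply: leq_trans (min_le a b 0 R q _) _; [split; lia | lia].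
- by apply: leq_trans (min_le a 0 b.+1 R q _) _; [split; lia | lia].
- by apply: leq_trans (min_le a.+1 0 b R (- q) _) _; [split; lia | lia].
- by apply: leq_trans (min_le a.+1 b.+1 0 R (- q) _) _; [split; lia | lia].
Qed.

Lemma ip_solution_one_sided : vp = 0%N \/ vm = 0%N.
Proof.
have [[feas sum_r] min_sol] := sol.
case: (posnP vp) => [|vp_gt0]; [by left | right].
case: (posnP vm) => // vm_gt0.
have feas' : ip_feasible n k u vp.-1 vm.-1 r.-1 t.
  by split; [rewrite -feas; congr (_ + _ * _); lia | lia].
by have := min_sol _ _ _ _ _ feas'; lia.
Qed.

End IntegerProgram.

Arguments ip_solution_le_odd_cycle {n k u vp vm r t} sol {a b}.

Section CyclePositions.
Variables (n k u w : nat) (s : int).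
Hypothesis s_unit : s = 1 \/ s = -1.
Hypothesis cycle_closed : (n%:Z %| u%:Z + k%:Z * (s * w%:Z))%Z.

(* The truncated subtraction makes the first u steps rim steps. *)
Definition cycle_pos (i : nat) : int := (minn i u)%:Z + k%:Z * (s * (i - u)%N%:Z).

Lemma cycle_pos_shift i j d : (i < u + w)%N -> (j < u + w)%N ->
  d = `|j%:Z - i%:Z|%N \/ (d + `|j%:Z - i%:Z| = u + w)%N ->
  exists a b : int, (`|a| + `|b| = d)%N /\
    (cycle_pos i + a + k%:Z * b == cycle_pos j %[mod n])%Z.
Proof.
move=> lt_i lt_j [-> | wrap].
  exists ((minn j u)%:Z - (minn i u)%:Z), (s * ((j - u)%N%:Z - (i - u)%N%:Z)).
  by split; [case: s_unit => ->; lia | apply/eqP; congr modz; rewrite /cycle_pos; ring].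
have [le_ij | lt_ji] := leqP i j.
- exists ((minn j u)%:Z - (minn i u)%:Z - u%:Z).
  exists (s * ((j - u)%N%:Z - (i - u)%N%:Z - w%:Z)).
  split; first by case: s_unit => ->; lia.
  rewrite eqz_mod_dvd (_ : _ - _ = - (u%:Z + k%:Z * (s * w%:Z))) ?rpredN //.
  by rewrite /cycle_pos; ring.
- exists ((minn j u)%:Z - (minn i u)%:Z + u%:Z).
  exists (s * ((j - u)%N%:Z - (i - u)%N%:Z + w%:Z)).
  split; first by case: s_unit => ->; lia.
  rewrite eqz_mod_dvd (_ : _ - _ = u%:Z + k%:Z * (s * w%:Z)) //.
  by rewrite /cycle_pos; ring.
Qed.

End CyclePositions.

Arguments cycle_pos_shift {n k u w s} s_unit cycle_closed {i j d}.

Section PowerClique.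
Variables (n k u vp vm r : nat) (t s : int).
Hypothesis n_gt0 : (0 < n)%N.
Hypothesis sol : ip_solution n k u vp vm r t.
Hypothesis s_unit : s = 1 \/ s = -1.
Hypothesis s_sign : vp%:Z - vm%:Z = s * (vp + vm)%N%:Z.

Let pos := cycle_pos k u s.

Lemma cycle_pos_power_adj x y i j :
  (i <= 2 * r)%N -> (j <= 2 * r)%N -> (x != y) || (i != j) ->
  power_adj (pet_adj n k) (2 * r + 1) (petv n_gt0 x (pos i)) (petv n_gt0 y (pos j)).
Proof.
move=> le_i le_j neq_xy_ij; have [[feas sum_r] _] := sol.
have closed : (n%:Z %| u%:Z + k%:Z * (s * (vp + vm)%N%:Z))%Z.
  by apply/dvdzP; exists t; rewrite -s_sign.
have [d [arc odd_d le_d]] : exists d : nat, [/\ d = `|j%:Z - i%:Z|%N \/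
      (d + `|j%:Z - i%:Z| = u + (vp + vm))%N, odd d = (x == y) &
      (d + (if x == y then 2 else 1) <= 2 * r + 1)%N].
  rewrite addnA sum_r; apply: odd_cycle_arc; first by rewrite addn1 /= oddM andFb.
    by lia.
  by move/eqP=> same; move: neq_xy_ij; rewrite same eqxx /=; lia.
have lt_i : (i < u + (vp + vm))%N by lia.
have lt_j : (j < u + (vp + vm))%N by lia.
have [a [b [ab_d shift]]] := cycle_pos_shift s_unit closed lt_i lt_j arc.
split.
- rewrite petv_eq; case: eqP => [same | //] /=.
  apply: contraTN neq_xy_ij; rewrite same eqxx /= negbK => pos_ij.
  have ab_closed : (n%:Z %| a + k%:Z * b)%Z.
    move: shift pos_ij; rewrite !eqz_mod_dvd => shift pos_ij.
    by have := rpredB shift pos_ij; rewrite (_ : _ - _ = a + k%:Z * b) //; ring.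
  have := ip_solution_le_odd_cycle sol ab_closed; rewrite ab_d odd_d same eqxx.
  by move=> /(_ isT); move: le_d; rewrite same eqxx; lia.
- have := pet_walk k n_gt0 x y a b (pos i); rewrite ab_d.
  have -> : petv n_gt0 y (pos i + a + k%:Z * b) = petv n_gt0 y (pos j).
    by apply/eqP; rewrite petv_eq eqxx.
  have spoke_j := pet_adj_spoke k y (ordz n_gt0 (pos j)).
  move=> walk_ij; apply: (walk_pad (pet_adj_sym k) spoke_j le_d _ walk_ij).
  by rewrite addn1 oddS oddD odd_d mul2n odd_double; case: (x == y).
Qed.

End PowerClique.

Local Close Scope ring_scope.

Theorem theorem3 (n k : nat) (hk : 2 < 2 * k) (hkn : 2 * k <= n)
  (hsol : exists u vp vm r t, ip_solution n k u vp vm r t)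
  (hnotriv : forall u vp vm r t, ip_solution n k u vp vm r t -> ~ ip_trivial u vp vm)
  (u vp vm r : nat) (t : int) (hs : ip_solution n k u vp vm r t) :
  exists f : 'I_(4 * r + 2) -> pet_vertex n,
    complete_hom (@power_adj (pet_vertex n) (pet_adj n k) (2 * r + 1)) f.
Proof.
have n_gt0 : 0 < n by lia.
pose s : int := if vm == 0 then 1%R else (-1)%R.
have s_unit : s = 1%R \/ s = (-1)%R by rewrite /s; case: eqP; [left | right].
have s_sign : (vp%:Z - vm%:Z = s * (vp + vm)%:Z)%R.
  by rewrite /s; case: (ip_solution_one_sided hs) => ->; case: eqP => //=; lia.
pose N := 2 * r + 1.
exists (fun p => petv n_gt0 (N <= p) (cycle_pos k u s (if N <= p then p - N else p))).
move=> p q neq_pq; apply: (cycle_pos_power_adj n_gt0 hs s_unit s_sign).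
- by case: ifP; have := ltn_ord p; lia.
- by case: ifP; have := ltn_ord q; lia.
move: neq_pq; rewrite -val_eqE /=; have := ltn_ord p; have := ltn_ord q.
by case: (leqP N p); case: (leqP N q); lia.
Qed.
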